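(* For all $\widehat\psi_1,\widehat\psi_2\in\mathcal{M}_0$ with $\widehat\psi_1\le\widehat\psi_2$ entrywise, one has $\widehat\Phi(\widehat\psi_1)\ge\widehat\Phi(\widehat\psi_2)$ entrywise.
   Context: Discrete setting: $\Omega=(0,1)$, $T>0$, $\sigma>0$; $u_T:[0,1]\to\mathbb{R}$ bounded. $f:[0,1]\times\mathbb{R}\to\mathbb{R}$ is continuous and nonincreasing in its second variable, bounded, and $f\le0$. For positive integers $I,J$: $\Delta t=T/I$, $\Delta x=1/J$, $x_j=j\Delta x$. $\mathcal{M}$ is the set of real matrices $(m_{i,j})_{0\le i\le I,0\le j\le J}$, $\mathcal{M}_\epsilon=\{m\in\mathcal{M}: m_{i,j}\ge\epsilon\ \forall i,j\}$. For $\widehat\psi\in\mathcal{M}_0$, $\widehat\Phi(\widehat\psi)$ is the unique $\widehat\phi\in\mathcal{M}$ with $\widehat\phi_{I,j}=\exp(u_T(x_j)/\sigma^2)$ and, for $0\le i\le I-1$, $0\le j\le J$, $\frac{\widehat\phi_{i+1,j}-\widehat\phi_{i,j}}{\Delta t}+\frac{\sigma^2}{2}\frac{\widehat\phi_{i,j+1}-2\widehat\phi_{i,j}+\widehat\phi_{i,j-1}}{(\Delta x)^2}=-\frac{1}{\sigma^2}f(x_j,\widehat\phi_{i,j}\widehat\psi_{i,j})\widehat\phi_{i,j}$, with conventions $\widehat\phi_{i,-1}=\widehat\phi_{i,0}$, $\widehat\phi_{i,J+1}=\widehat\phi_{i,J}$ (existence and uniqueness being known, and $\widehat\phi\ge0$).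 *)

From Stdlib Require Import Reals Lra Lia.
Open Scope R_scope.

(* Matrices (m_{i,j})_{0<=i<=I, 0<=j<=J} are represented as functions
   nat -> nat -> R; only entries with i <= I, j <= J are meaningful. *)
Definition mat := nat -> nat -> R.

Definition in_M_eps (I J : nat) (eps : R) (m : mat) : Prop :=
  forall i j, (i <= I)%nat -> (j <= J)%nat -> eps <= m i j.

Definition mat_le (I J : nat) (m1 m2 : mat) : Prop :=
  forall i j, (i <= I)%nat -> (j <= J)%nat -> m1 i j <= m2 i j.

Definition dt (T : R) (I : nat) : R := T / INR I.
Definition dx (J : nat) : R := 1 / INR J.
Definition xg (J j : nat) : R := INR j * dx J.

(* Neumann-type conventions phi_{i,-1} = phi_{i,0}, phi_{i,J+1} = phi_{i,J} *)
Definition left_nb (phi : mat) (i j : nat) : R :=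
  match j with O => phi i O | S k => phi i k end.
Definition right_nb (J : nat) (phi : mat) (i j : nat) : R :=
  if Nat.eqb j J then phi i J else phi i (S j).

(* phi = Phi_hat(psi): the terminal condition and the implicit scheme *)
Definition is_Phi (T sigma : R) (uT : R -> R) (f : R -> R -> R)
    (I J : nat) (psi phi : mat) : Prop :=
  (forall j, (j <= J)%nat -> phi I j = exp (uT (xg J j) / sigma ^ 2)) /\
  (forall i j, (i < I)%nat -> (j <= J)%nat ->
     (phi (S i) j - phi i j) / dt T I
     + sigma ^ 2 / 2 * (right_nb J phi i j - 2 * phi i j + left_nb phi i j) / (dx J) ^ 2
     = - (1 / sigma ^ 2) * f (xg J j) (phi i j * psi i j) * phi i j).

Definition f_continuous (f : R -> R -> R) : Prop :=
  forall x y, 0 <= x <= 1 -> forall eps, eps > 0 -> exists delta, delta > 0 /\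
    forall x' y', 0 <= x' <= 1 -> Rabs (x' - x) < delta -> Rabs (y' - y) < delta ->
      Rabs (f x' y' - f x y) < eps.
Definition f_nonincreasing (f : R -> R -> R) : Prop :=
  forall x y1 y2, 0 <= x <= 1 -> y1 <= y2 -> f x y2 <= f x y1.
Definition f_bounded (f : R -> R -> R) : Prop :=
  exists C, forall x y, 0 <= x <= 1 -> Rabs (f x y) <= C.
Definition f_nonpos (f : R -> R -> R) : Prop :=
  forall x y, 0 <= x <= 1 -> f x y <= 0.
Definition uT_bounded (uT : R -> R) : Prop :=
  exists C, forall x, 0 <= x <= 1 -> Rabs (uT x) <= C.

From Stdlib Require Import Reals.
From Stdlib Require Import Lra Lia.
Open Scope R_scope.

(* Proof idea: a discrete comparison (maximum) principle, run backward in time.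
   Both phi1 = Phi(psi1) and phi2 = Phi(psi2) share the terminal row i = I.
   Assume the rows i+1 satisfy phi2 <= phi1 and look at row i: let m be an index
   maximising d = phi2 - phi1 on that row.  At a maximum the discrete Neumann
   Laplacian of d is <= 0, and since f is nonpositive and nonincreasing while
   phi1, psi1 >= 0 and psi1 <= psi2, the reaction term of phi2 dominates that of
   phi1 wherever phi1 <= phi2.  Subtracting the two scheme equations at (i,m)
   then gives d(i+1,m) >= d(i,m), so d(i,m) > 0 is impossible.  Hence each row
   inherits the comparison from the next one and backward induction concludes. *)

Lemma finite_argmax (h : nat -> R) (J : nat) :
  exists m, (m <= J)%nat /\ forall k, (k <= J)%nat -> h k <= h m.
Proof.
  induction J as [|J [m [Hm Hmax]]].
  - exists O; split; [lia|]. intros k Hk. replace k with O by lia. lra.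
  - destruct (Rle_dec (h (S J)) (h m)) as [Hle|Hgt].
    + exists m; split; [lia|]. intros k Hk.
      destruct (Nat.eq_dec k (S J)) as [->|Hne]; [lra|]. apply Hmax; lia.
    + exists (S J); split; [lia|]. intros k Hk.
      destruct (Nat.eq_dec k (S J)) as [->|Hne]; [lra|].
      specialize (Hmax k ltac:(lia)); lra.
Qed.

Lemma backward_induction (P : nat -> Prop) (I : nat) :
  P I -> (forall i, (i < I)%nat -> P (S i) -> P i) ->
  forall i, (i <= I)%nat -> P i.
Proof.
  intros HI Hstep.
  assert (Hn : forall n, (n <= I)%nat -> P (I - n)%nat).
  { induction n as [|n IH]; intros Hn.
    - now replace (I - 0)%nat with I by lia.
    - apply Hstep; [lia|]. replace (S (I - S n)) with (I - n)%nat by lia.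
      apply IH; lia. }
  intros i Hi. replace i with (I - (I - i))%nat by lia. apply Hn; lia.
Qed.

Lemma grid_point_in_unit (J j : nat) : (0 < J)%nat -> (j <= J)%nat ->
  0 <= xg J j <= 1.
Proof.
  intros HJ Hj. unfold xg, dx.
  assert (0 < INR J) by (apply lt_0_INR; lia).
  assert (INR j <= INR J) by (apply le_INR; lia).
  assert (0 <= INR j) by apply pos_INR.
  replace (INR j * (1 / INR J)) with (INR j / INR J) by (field; lra).
  split.
  - apply Rle_mult_inv_pos; lra.
  - unfold Rdiv. rewrite <- (Rinv_r (INR J)) by lra.
    apply Rmult_le_compat_r; [apply Rlt_le, Rinv_0_lt_compat|]; lra.
Qed.

Definition stencil (J : nat) (phi : mat) (i j : nat) : R :=
  right_nb J phi i j - 2 * phi i j + left_nb phi i j.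

Definition right_index (J j : nat) : nat := if Nat.eqb j J then J else S j.

Lemma right_nb_index (J : nat) (phi : mat) (i j : nat) :
  right_nb J phi i j = phi i (right_index J j).
Proof. unfold right_nb, right_index. now destruct (Nat.eqb j J). Qed.

Lemma left_nb_index (phi : mat) (i j : nat) : left_nb phi i j = phi i (Nat.pred j).
Proof. now destruct j. Qed.

Lemma right_index_le (J j : nat) : (j <= J)%nat -> (right_index J j <= J)%nat.
Proof. unfold right_index. destruct (Nat.eqb_spec j J); lia. Qed.

Lemma stencil_sub (J : nat) (phi1 phi2 : mat) (i j : nat) :
  stencil J (fun a b => phi2 a b - phi1 a b) i j
  = stencil J phi2 i j - stencil J phi1 i j.
Proof. unfold stencil. rewrite !right_nb_index, !left_nb_index. ring. Qed.

Lemma stencil_at_max (J : nat) (phi : mat) (i m : nat) : (m <= J)%nat ->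
  (forall k, (k <= J)%nat -> phi i k <= phi i m) -> stencil J phi i m <= 0.
Proof.
  intros Hm Hmax. unfold stencil. rewrite right_nb_index, left_nb_index.
  pose proof (Hmax _ (right_index_le J m Hm)).
  pose proof (Hmax (Nat.pred m) ltac:(lia)).
  lra.
Qed.

Lemma reaction_monotone (f : R -> R -> R) (x p1 p2 q1 q2 : R) :
  f_nonincreasing f -> f_nonpos f -> 0 <= x <= 1 ->
  0 <= p1 <= p2 -> 0 <= q1 <= q2 ->
  - f x (p1 * q1) * p1 <= - f x (p2 * q2) * p2.
Proof.
  intros hfm hfn Hx Hp Hq.
  assert (Hpq : p1 * q1 <= p2 * q2) by (apply Rmult_le_compat; lra).
  pose proof (hfm x _ _ Hx Hpq).
  pose proof (hfn x (p1 * q1) Hx).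
  apply Rmult_le_compat; lra.
Qed.

Lemma step_difference (a b s P1 P2 p1 p2 L1 L2 G1 G2 : R) :
  0 < a -> 0 < b -> 0 <= s ->
  (P1 - p1) / a + s * L1 / b = G1 ->
  (P2 - p2) / a + s * L2 / b = G2 ->
  G1 <= G2 -> L2 - L1 <= 0 ->
  p2 - p1 <= P2 - P1.
Proof.
  intros Ha Hb Hs E1 E2 HG HL.
  assert (Hq : ((P2 - P1) - (p2 - p1)) / a = (G2 - G1) - s * (L2 - L1) / b).
  { rewrite <- E1, <- E2. field. lra. }
  assert (0 <= s * (- (L2 - L1)) / b)
    by (apply Rle_mult_inv_pos; [apply Rmult_le_pos|]; lra).
  assert (0 <= ((P2 - P1) - (p2 - p1)) / a)
    by (rewrite Hq; unfold Rdiv in *; lra).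
  assert (0 <= (P2 - P1) - (p2 - p1)); [|lra].
  replace ((P2 - P1) - (p2 - p1)) with (a * (((P2 - P1) - (p2 - p1)) / a))
    by (field; lra).
  apply Rmult_le_pos; lra.
Qed.

Section RowComparison.

Variables (T sigma : R) (uT : R -> R) (f : R -> R -> R) (I J : nat).
Hypotheses (hT : 0 < T) (hsigma : 0 < sigma)
  (hfm : f_nonincreasing f) (hfn : f_nonpos f)
  (hI : (0 < I)%nat) (hJ : (0 < J)%nat).

Lemma row_comparison (psi1 psi2 phi1 phi2 : mat) (i : nat) :
  (i < I)%nat ->
  is_Phi T sigma uT f I J psi1 phi1 -> is_Phi T sigma uT f I J psi2 phi2 ->
  (forall j, (j <= J)%nat -> 0 <= phi1 i j /\ 0 <= psi1 i j /\ psi1 i j <= psi2 i j) ->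
  (forall j, (j <= J)%nat -> phi2 (S i) j <= phi1 (S i) j) ->
  forall j, (j <= J)%nat -> phi2 i j <= phi1 i j.
Proof.
  intros Hi [_ E1] [_ E2] Hrow Hnext.
  set (d := fun a b => phi2 a b - phi1 a b).
  destruct (finite_argmax (d i) J) as [m [Hm Hmax]].
  enough (Hdm : d i m <= 0) by (intros j Hj; specialize (Hmax j Hj); unfold d in *; lra).
  apply Rnot_lt_le. intros Hpos. unfold d in Hpos.
  destruct (Hrow m Hm) as [Hphi1 [Hpsi1 Hpsi]].
  set (G1 := - (1 / sigma ^ 2) * f (xg J m) (phi1 i m * psi1 i m) * phi1 i m).
  set (G2 := - (1 / sigma ^ 2) * f (xg J m) (phi2 i m * psi2 i m) * phi2 i m).
  assert (Hreact : G1 <= G2).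
  { assert (0 < 1 / sigma ^ 2) by (apply Rdiv_lt_0_compat; [lra | apply pow_lt; lra]).
    pose proof (reaction_monotone f (xg J m) (phi1 i m) (phi2 i m) (psi1 i m) (psi2 i m)
                  hfm hfn (grid_point_in_unit J m hJ Hm) ltac:(lra) ltac:(lra)).
    unfold G1, G2. rewrite !Rmult_assoc, <- !Ropp_mult_distr_l.
    apply Ropp_le_contravar, Rmult_le_compat_l; lra. }
  assert (Hlap : stencil J phi2 i m - stencil J phi1 i m <= 0)
    by (rewrite <- stencil_sub; exact (stencil_at_max J d i m Hm Hmax)).
  assert (Hincr : phi2 i m - phi1 i m <= phi2 (S i) m - phi1 (S i) m).
  { apply (step_difference (dt T I) (dx J ^ 2) (sigma ^ 2 / 2)
             (phi1 (S i) m) (phi2 (S i) m) (phi1 i m) (phi2 i m)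
             (stencil J phi1 i m) (stencil J phi2 i m) G1 G2); try assumption.
    - apply Rdiv_lt_0_compat; [lra | apply lt_0_INR; lia].
    - apply pow_lt, Rdiv_lt_0_compat; [lra | apply lt_0_INR; lia].
    - assert (0 < sigma ^ 2) by (apply pow_lt; lra). lra.
    - exact (E1 i m Hi Hm).
    - exact (E2 i m Hi Hm). }
  pose proof (Hnext m Hm). lra.
Qed.

End RowComparison.

Theorem proposition8 (T sigma : R) (uT : R -> R) (f : R -> R -> R) (I J : nat)
  (hT : 0 < T) (hsigma : 0 < sigma)
  (huT : uT_bounded uT)
  (hfc : f_continuous f) (hfm : f_nonincreasing f)
  (hfb : f_bounded f) (hfn : f_nonpos f)
  (hI : (0 < I)%nat) (hJ : (0 < J)%nat)
  (psi1 psi2 phi1 phi2 : mat)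
  (hpsi1 : in_M_eps I J 0 psi1) (hpsi2 : in_M_eps I J 0 psi2)
  (hle : mat_le I J psi1 psi2)
  (hphi1 : is_Phi T sigma uT f I J psi1 phi1)
  (hphi2 : is_Phi T sigma uT f I J psi2 phi2)
  (hphi1nn : in_M_eps I J 0 phi1) (hphi2nn : in_M_eps I J 0 phi2) :
  mat_le I J phi2 phi1.
Proof.
  intros i j Hi Hj. revert j Hj.
  apply (backward_induction (fun i => forall j, (j <= J)%nat -> phi2 i j <= phi1 i j) I);
    [| | exact Hi].
  - intros k Hk. rewrite (proj1 hphi1 k Hk), (proj1 hphi2 k Hk). lra.
  - intros k Hk Hnext.
    apply (row_comparison T sigma uT f I J hT hsigma hfm hfn hI hJ
             psi1 psi2 phi1 phi2 k Hk hphi1 hphi2); [|exact Hnext].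
    intros l Hl. repeat split.
    + apply hphi1nn; lia.
    + apply hpsi1; lia.
    + apply hle; lia.
Qed.
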